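(* Let $\kappa\ge 3$ and $n\ge 1$ be integers, $r=\lfloor(\kappa-2)/2\rfloor$, $r'=\lceil(\kappa-2)/2\rceil$, and let $F$ be a field. Let $p=(p_m)_{m\in\mathbb Z}$, $q=(q_m)_{m\in\mathbb Z}$ be $n$-periodic sequences in $F$, and write $(p^{(k)},q^{(k)})=\Phi^k(p,q)$ for $k\in\mathbb Z$, where $\Phi$ is the map defined below; assume all these iterates are defined (no division by zero occurs). Let $Y:\{(i,j,k)\in\mathbb Z^3: i+j+k\equiv 0 \bmod 2\}\to F\setminus\{0,-1\}$ satisfy the $Y$-system $$Y_{i,j,k+1}Y_{i,j,k-1}=\frac{(1+Y_{i+1,j,k})(1+Y_{i-1,j,k})}{(1+Y_{i,j+1,k}^{-1})(1+Y_{i,j-1,k}^{-1})}\quad\text{for all }(i,j,k)\text{ with } i+j+k\text{ odd},$$ with initial conditions $$Y_{i,j,-1}=\Big(q_{((\kappa-2)i+\kappa j+r-r')/2}\Big)^{-1}\ (i+j\text{ odd}),\qquad Y_{i,j,0}=p_{((\kappa-2)i+\kappa j)/2}\ (i+j\text{ even}).$$ Then for all $i,j,k\in\mathbb Z$: $$p^{(k)}_{((\kappa-2)i+\kappa j+k(r-r'))/2}=Y_{i,j,k}\quad\text{if } i+j+k\equiv 0\bmod 2,$$ $$q^{(k)}_{((\kappa-2)i+\kappa j+(k+1)(r-r'))/2}=Y_{i,j,k-1}^{-1}\quad\text{if } i+j+k\equiv 1\bmod 2.$$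
   Context: The map $\Phi$ (the higher pentagram map $T_\kappa$ written in the $(p,q)$ coordinates of twisted $n$-gons) sends a pair of $n$-periodic sequences $(p,q)$ to $(p',q')$ with $$q'_m=p_{m+r'-r}^{-1},\qquad p'_m=q_m\,\frac{(1+p_{m-r})(1+p_{m+r'})}{(1+p_{m-r-1}^{-1})(1+p_{m+r'+1}^{-1})}.$$ $\Phi$ is invertible where defined (one recovers $p$ from $q'$ and then $q$ from $p'$), and for $k<0$, $\Phi^k$ denotes the $|k|$-fold iterate of $\Phi^{-1}$. All subscripts appearing are integers. *)

From HB Require Import structures.
From mathcomp Require Import all_boot all_order all_algebra.
Set Implicit Arguments. Unset Strict Implicit. Unset Printing Implicit Defensive.
Import Order.TTheory GRing.Theory Num.Theory.
Local Open Scope ring_scope.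

Definition rr (kappa : nat) : int := ((kappa - 2)./2)%N%:Z.
Definition rr' (kappa : nat) : int := (uphalf (kappa - 2))%N%:Z.

Section Pent.
Variable F : fieldType.
Variable kappa : nat.
Notation r := (rr kappa).
Notation r' := (rr' kappa).

Definition pqseq := ((int -> F) * (int -> F))%type.

Definition Phi (pq : pqseq) : pqseq :=
  let p := pq.1 in let q := pq.2 in
  (fun m => q m * ((1 + p (m - r)) * (1 + p (m + r')))
                 / ((1 + (p (m - r - 1))^-1) * (1 + (p (m + r' + 1))^-1)),
   fun m => (p (m + r' - r))^-1).

Definition Phi_dom (pq : pqseq) : Prop :=
  forall m : int, pq.1 m != 0 /\ 1 + (pq.1 m)^-1 != 0.

Definition PhiInv (pq' : pqseq) : pqseq :=
  let p' := pq'.1 in let q' := pq'.2 in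
  let p := fun m => (q' (m - r' + r))^-1 in
  (p,
   fun m => p' m * ((1 + (p (m - r - 1))^-1) * (1 + (p (m + r' + 1))^-1))
                 / ((1 + p (m - r)) * (1 + p (m + r')))).

Definition PhiInv_dom (pq' : pqseq) : Prop :=
  forall m : int, pq'.2 m != 0 /\ 1 + (pq'.2 (m - r' + r))^-1 != 0.

Definition Phi_pow (k : int) (pq : pqseq) : pqseq :=
  match k with
  | Posz n => iter n Phi pq
  | Negz n => iter n.+1 PhiInv pq
  end.

End Pent.

Definition periodic (F : Type) (n : nat) (s : int -> F) : Prop :=
  forall m : int, s (m + n%:Z) = s m.

From HB Require Import structures.
From mathcomp Require Import all_boot all_order all_algebra.
From mathcomp Require Import zify ring.
Import Order.TTheory GRing.Theory Num.Theory.
Local Open Scope ring_scope.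

(* The lattice point (i, j, k) of the Y-system sits at position [pent_index kappa i j k]
   of the k-th iterate; moving to a neighbour (i +- 1, j) or (i, j +- 1) of the
   slice k shifts this position by exactly the offsets -r, r', -r-1, r'+1 occurring
   in Phi, so one application of Phi (resp. Phi^{-1}) is one step k -> k+1 (resp.
   k+1 -> k) of the Y-system.  Induction on k in both directions from the initial
   slices k = -1, 0 gives the theorem. *)

Definition pent_index (kappa : nat) (i j k : int) : int :=
  (((kappa%:Z - 2) * i + kappa%:Z * j + k * (rr kappa - rr' kappa)) %/ 2)%Z.

Definition encodes_slice (kappa : nat) (F : fieldType) (Y : int -> int -> int -> F)
    (pq : pqseq F) (k : int) : Prop :=
  (forall i j : int, (2 %| i + j + k)%Z -> pq.1 (pent_index kappa i j k) = Y i j k) /\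
  (forall i j : int, ~~ (2 %| i + j + k)%Z ->
      pq.2 (pent_index kappa i j (k + 1)) = (Y i j (k - 1))^-1).

Arguments encodes_slice kappa {F} Y pq k.

Section PentIndex.
Variable kappa : nat.
Hypothesis kappa_ge2 : (2 <= kappa)%N.
Notation r := (rr kappa).
Notation r' := (rr' kappa).
Notation idx := (pent_index kappa).

Lemma rr_add_rr' : r + r' = kappa%:Z - 2.
Proof. rewrite /rr /rr'; lia. Qed.

Lemma pent_index_iS i j k : idx (i + 1) j k = idx i j (k + 1) + r'.
Proof. move: rr_add_rr'; rewrite /pent_index; lia. Qed.

Lemma pent_index_iN i j k : idx (i - 1) j k = idx i j (k + 1) - r.
Proof. move: rr_add_rr'; rewrite /pent_index; lia. Qed.

Lemma pent_index_jS i j k : idx i (j + 1) k = idx i j (k + 1) + r' + 1.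
Proof. move: rr_add_rr'; rewrite /pent_index; lia. Qed.

Lemma pent_index_jN i j k : idx i (j - 1) k = idx i j (k + 1) - r - 1.
Proof. move: rr_add_rr'; rewrite /pent_index; lia. Qed.

Lemma pent_index_kSS i j k : idx i j (k + 1 + 1) = idx i j k - r' + r.
Proof. move: rr_add_rr'; rewrite /pent_index; lia. Qed.

End PentIndex.

Lemma addr1_neq0 (F : fieldType) (y : F) : y != -1 -> 1 + y != 0.
Proof. by move=> yN1; rewrite addrC addr_eq0. Qed.

Lemma add1rV_neq0 (F : fieldType) (y : F) : y != 0 -> y != -1 -> 1 + y^-1 != 0.
Proof.
move=> y0 yN1; have -> : 1 + y^-1 = (1 + y) / y by rewrite mulrDl mul1r divff // addrC.
by rewrite mulf_neq0 ?invr_eq0 ?addr1_neq0.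
Qed.

Lemma PhiInv_snd (F : fieldType) (kappa : nat) (pq : pqseq F) (m : int) :
  let p := (PhiInv kappa pq).1 in
  (PhiInv kappa pq).2 m =
    pq.1 m * ((1 + (p (m - rr kappa - 1))^-1) * (1 + (p (m + rr' kappa + 1))^-1))
    / ((1 + p (m - rr kappa)) * (1 + p (m + rr' kappa))).
Proof. by []. Qed.

Section YSystem.
Variables (F : fieldType) (Y : int -> int -> int -> F).
Hypothesis Y_generic : forall i j k : int, (2 %| i + j + k)%Z -> Y i j k != 0 /\ Y i j k != -1.
Hypothesis Y_system : forall i j k : int, ~~ (2 %| i + j + k)%Z ->
     Y i j (k + 1) * Y i j (k - 1) =
     (1 + Y (i + 1) j k) * (1 + Y (i - 1) j k)
       / ((1 + (Y i (j + 1) k)^-1) * (1 + (Y i (j - 1) k)^-1)).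

Lemma Y_system_next i j k : ~~ (2 %| i + j + k)%Z ->
  Y i j (k + 1) = (Y i j (k - 1))^-1 * ((1 + Y (i - 1) j k) * (1 + Y (i + 1) j k))
                  / ((1 + (Y i (j - 1) k)^-1) * (1 + (Y i (j + 1) k)^-1)).
Proof.
move=> odd_ijk; case: (Y_generic i j (k - 1)) => [|Y0 _]; first lia.
rewrite -[LHS](mulfK Y0) Y_system // mulrC mulrA.
by rewrite (mulrC (1 + Y (i + 1) j k)) (mulrC (1 + (Y i (j + 1) k)^-1)).
Qed.

Lemma Y_system_prev i j k : ~~ (2 %| i + j + k)%Z ->
  (Y i j (k - 1))^-1 = Y i j (k + 1) * ((1 + (Y i (j - 1) k)^-1) * (1 + (Y i (j + 1) k)^-1))
                       / ((1 + Y (i - 1) j k) * (1 + Y (i + 1) j k)).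
Proof.
move=> odd_ijk; rewrite Y_system_next //.
case: (Y_generic i j (k - 1)) => [|Y0 _]; first lia.
case: (Y_generic (i - 1) j k) => [|_ Yi1]; first lia.
case: (Y_generic (i + 1) j k) => [|_ Yi'1]; first lia.
case: (Y_generic i (j - 1) k) => [|Yj0 Yj1]; first lia.
case: (Y_generic i (j + 1) k) => [|Yj'0 Yj'1]; first lia.
field; rewrite Y0 Yj0 Yj'0 [Y i (j + 1) k + 1]addrC [Y i (j - 1) k + 1]addrC.
by rewrite !addr1_neq0.
Qed.

Variable kappa : nat.
Hypothesis kappa_ge2 : (2 <= kappa)%N.

Lemma encodes_slice_Phi pq k :
  encodes_slice kappa Y pq k -> encodes_slice kappa Y (Phi kappa pq) (k + 1).
Proof.
case=> enc_p enc_q; split=> i j ijk /=.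
- rewrite -pent_index_jN // -pent_index_jS // -pent_index_iN // -pent_index_iS //.
  rewrite enc_q; last lia.
  by rewrite !enc_p ?Y_system_next //; lia.
- rewrite pent_index_kSS // (addrAC _ (rr kappa)) subrK addrK enc_p; last lia.
  by rewrite addrK.
Qed.

Lemma encodes_slice_PhiInv pq k :
  encodes_slice kappa Y pq (k + 1) -> encodes_slice kappa Y (PhiInv kappa pq) k.
Proof.
case=> enc_p enc_q.
have enc_p' i j : (2 %| i + j + k)%Z -> (PhiInv kappa pq).1 (pent_index kappa i j k) = Y i j k.
  move=> ijk; rewrite /= -pent_index_kSS // enc_q; last lia.
  by rewrite addrK invrK.
split=> // i j ijk; rewrite PhiInv_snd.
rewrite -pent_index_jN // -pent_index_jS // -pent_index_iN // -pent_index_iS //.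
rewrite enc_p; last lia.
by rewrite !enc_p' ?Y_system_prev //; lia.
Qed.

Lemma encodes_slice_Phi_pow pq :
  encodes_slice kappa Y pq 0 -> forall k : int, encodes_slice kappa Y (Phi_pow kappa k pq) k.
Proof.
move=> enc0 [] m /=.
- elim: m => [|m IH] //=.
  by rewrite -addn1 PoszD; apply: encodes_slice_Phi.
- elim: m => [|m IH].
    by apply: encodes_slice_PhiInv; rewrite NegzE addNr.
  rewrite iterS; apply: encodes_slice_PhiInv.
  by have -> : Negz m.+1 + 1 = Negz m by rewrite !NegzE; lia.
Qed.

End YSystem.

Theorem mainTheorem1 (kappa n : nat) (F : fieldType)
    (p q : int -> F) (Y : int -> int -> int -> F) :
  (3 <= kappa)%N -> (1 <= n)%N ->
  periodic n p -> periodic n q ->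
  (* all iterates Phi^k (p,q), k in Z, are defined *)
  (forall k : nat, Phi_dom (iter k (Phi kappa) (p, q))
                   /\ PhiInv_dom kappa (iter k (PhiInv kappa) (p, q))) ->
  (* Y takes values in F \ {0,-1} on its domain *)
  (forall i j k : int, (2 %| i + j + k)%Z -> Y i j k != 0 /\ Y i j k != -1) ->
  (* the Y-system *)
  (forall i j k : int, ~~ (2 %| i + j + k)%Z ->
     Y i j (k + 1) * Y i j (k - 1) =
     (1 + Y (i + 1) j k) * (1 + Y (i - 1) j k)
       / ((1 + (Y i (j + 1) k)^-1) * (1 + (Y i (j - 1) k)^-1))) ->
  (* initial conditions *)
  (forall i j : int, ~~ (2 %| i + j)%Z ->
     Y i j (-1) = (q ((((kappa%:Z - 2) * i + kappa%:Z * j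
                        + rr kappa - rr' kappa) %/ 2)%Z))^-1) ->
  (forall i j : int, (2 %| i + j)%Z ->
     Y i j 0 = p ((((kappa%:Z - 2) * i + kappa%:Z * j) %/ 2)%Z)) ->
  forall i j k : int,
    ((2 %| i + j + k)%Z ->
       (Phi_pow kappa k (p, q)).1
         ((((kappa%:Z - 2) * i + kappa%:Z * j + k * (rr kappa - rr' kappa)) %/ 2)%Z)
       = Y i j k) /\
    (~~ (2 %| i + j + k)%Z ->
       (Phi_pow kappa k (p, q)).2
         ((((kappa%:Z - 2) * i + kappa%:Z * j + (k + 1) * (rr kappa - rr' kappa)) %/ 2)%Z)
       = (Y i j (k - 1))^-1).
Proof.
move=> kappa_ge3 _ _ _ _ Y_generic Y_system Y_init_q Y_init_p i j k.
have kappa_ge2 : (2 <= kappa)%N by apply: ltnW.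
have enc0 : encodes_slice kappa Y (p, q) 0.
  split=> i' j' /=; rewrite addr0 => ij.
  - by rewrite Y_init_p // /pent_index mul0r addr0.
  - by rewrite sub0r Y_init_q ?invrK // /pent_index mul1r addrA.
have [enc_p enc_q] := @encodes_slice_Phi_pow F Y Y_generic Y_system kappa kappa_ge2 _ enc0 k.
by split; [exact: enc_p | exact: enc_q].
Qed.
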